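(* The anticyclic action of $\mathfrak{S}_{n+1}$ on signed shrubs on $\{1,\dots,n\}$ preserves the number of equivalence classes of ramified vertices: if $\sigma\cdot(\varepsilon,P)=(\varepsilon',P')$ then $|\operatorname{Ram}(P)|=|\operatorname{Ram}(P')|$.
   Context: A shrub $P$ on a finite set $I$ is a set $E$ of edges (unordered pairs of distinct elements of $I$) with a height function $h_P:I\to\mathbb{N}$; $j$ covers $i$ if $\{i,j\}\in E$ and $h_P(j)=h_P(i)+1$. Axioms: (1) edges join vertices whose heights differ by $1$; (2) every vertex of positive height covers some vertex; (3) no four distinct $a,b,c,d$ with $a$ covering $b$ and $c$, $c$ covering $d$, $\{b,d\}\notin E$; (4) no five distinct $a,b,c,d,e$ with $a$ covering $c,d$, $b$ covering $d,e$, $\{a,e\}\notin E$, $\{b,c\}\notin E$. A vertex is ramified if it covers at least two distinct vertices; two ramified vertices are equivalent if they cover the same set of vertices; $\operatorname{Ram}(P)$ is the set of equivalence classes, and $r^-$ the common set of vertices covered by elements of $r\in\operatorname{Ram}(P)$. For $S\subseteq I$, $\langle S\rangle_P$ is the set of $j$ such that every descending path from $j$ to height $0$ meets $S$; with $u[S]=\sum_{k\in S}u_k$, $f_P=\prod_{i\in I}u[\langle\{i\}\rangle_P]^{-1}\prod_{r\in\operatorname{Ram}(P)}u[\langle r^-\rangle_{P\setminus\langle r\rangle_P}]/u[\langle r^-\rangle_P]$, where $P\setminus\langle r\rangle_P$ is the restriction of $P$ to $I\setminus\langle r\rangle_P$. $\mathfrak{S}_{n+1}$ acts on $\mathbb{Q}(u_1,\dots,u_n)$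 by setting $u_0=-(u_1+\dots+u_n)$, permuting $u_0,\dots,u_n$ and re-expressing in $u_1,\dots,u_n$. Signed shrubs are pairs $(\varepsilon,P)$ with $\varepsilon=\pm1$; the map $(\varepsilon,P)\mapsto\varepsilon f_P$ is injective and its image is stable under $\mathfrak{S}_{n+1}$, and the anticyclic action is defined by $\sigma\cdot(\varepsilon,P)=(\varepsilon',P')$ where $\varepsilon'f_{P'}=\sigma\cdot(\varepsilon f_P)$. *)

From HB Require Import structures.
From mathcomp Require Import all_boot all_order all_algebra all_fingroup.
From mathcomp Require Import mpoly.
Set Implicit Arguments.
Unset Strict Implicit.
Unset Printing Implicit Defensive.
Import GRing.Theory.
Local Open Scope ring_scope.

Notation "x %:F" := (@FracField.tofrac _ x) : ring_scope.

(* Vertex set I = {1,...,n} is encoded as 'I_n : vertex i : 'I_n stands for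
   the element i+1, and carries the variable u_{i+1} = 'X_i of {mpoly rat[n]}. *)

Section Shrubs.
Variable n : nat.
Local Notation V := 'I_n.

(* A shrub: a set of edges (symmetric irreflexive relation = unordered pairs
   of distinct elements) together with a height function satisfying (1)-(4). *)
Record shrub := Shrub {
  sh_edge : rel V;
  sh_height : V -> nat;
  sh_sym : ssrbool.symmetric sh_edge;
  sh_irr : irreflexive sh_edge;
  sh_ax1 : forall i j, sh_edge i j ->
     (sh_height j == (sh_height i).+1) || (sh_height i == (sh_height j).+1);
  sh_ax2 : forall j, (0 < sh_height j)%N ->
     exists i, sh_edge i j && (sh_height j == (sh_height i).+1);
  sh_ax3 : forall a b c d, uniq [:: a; b; c; d] ->
     sh_edge b a && (sh_height a == (sh_height b).+1) ->
     sh_edge c a && (sh_height a == (sh_height c).+1) ->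
     sh_edge d c && (sh_height c == (sh_height d).+1) ->
     sh_edge b d;
  sh_ax4 : forall a b c d e, uniq [:: a; b; c; d; e] ->
     sh_edge c a && (sh_height a == (sh_height c).+1) ->
     sh_edge d a && (sh_height a == (sh_height d).+1) ->
     sh_edge d b && (sh_height b == (sh_height d).+1) ->
     sh_edge e b && (sh_height b == (sh_height e).+1) ->
     sh_edge a e || sh_edge b c
}.

Variable P : shrub.

Definition covers : rel V :=
  fun j i => sh_edge P i j && (sh_height P j == (sh_height P i).+1).

Definition down (v : V) : {set V} := [set i | covers v i].

Definition ramified (v : V) : bool := (1 < #|down v|)%N.

Definition Ram : {set {set V}} :=
  [set [set w | ramified w && (down w == down v)] | v in [set v | ramified v]].

(* r^- : the common set of vertices covered by elements of r *)
Definition rminus (r : {set V}) : {set V} := \bigcup_(v in r) down v.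

(* <S>_{P restricted to V0}: the j in V0 such that every descending path
   (inside V0) from j to height 0 meets S.  Descending paths have at most
   n vertices, so lengths k <= n cover all of them. *)
Definition lang (V0 S : {set V}) : {set V} :=
  [set j in V0 | [forall k : 'I_n.+1, forall p : k.-tuple V,
      (path covers j p && all (fun x => x \in V0) p
         && (sh_height P (last j p) == 0%N))
      ==> has (fun x => x \in S) (j :: p)]].

Definition langle (S : {set V}) : {set V} := lang setT S.

End Shrubs.

Definition uS (n : nat) (S : {set 'I_n}) : {mpoly rat[n]} := \sum_(k in S) 'X_k.

Definition fP (n : nat) (P : shrub n) : {fraction {mpoly rat[n]}} :=
  (\prod_(i : 'I_n) ((uS (langle P [set i]))%:F)^-1) *
  \prod_(r in Ram P)
     ((uS (lang P (~: langle P r) (rminus P r)))%:F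
        / (uS (langle P (rminus P r)))%:F).

(* u_j for j in {0,...,n}, with u_0 = -(u_1 + ... + u_n) *)
Definition uvar (n : nat) (j : 'I_n.+1) : {mpoly rat[n]} :=
  if unlift ord0 j is Some i then 'X_i else - \sum_(i < n) 'X_i.

(* the ring endomorphism u_j |-> u_{s j} (j = 1..n) of Q[u_1..u_n] *)
Definition sigma_poly (n : nat) (s : 'S_n.+1) (p : {mpoly rat[n]}) :
  {mpoly rat[n]} := p \mPo [tuple uvar (s (lift ord0 i)) | i < n].

Definition sigma_act (n : nat) (s : 'S_n.+1) (x : {fraction {mpoly rat[n]}}) :
  {fraction {mpoly rat[n]}} :=
  let r := generic_quotient.repr x in (sigma_poly s \n_r)%:F / (sigma_poly s \d_r)%:F.

Definition sgn (n : nat) (e : bool) : {fraction {mpoly rat[n]}} := (-1) ^+ e.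

(* f_P is a quotient of products of linear forms u[S]: the denominator has the
   n + |Ram P| factors u[<{i}>] and u[<r^->], the numerator the factors
   u[<r^->_{P \ <r>}].  For nonempty S the form u[S] is a prime of
   Q[u_1, ..., u_n], and it divides u[T] only when S = T.  Comparing heights
   of the vertices covered by ramified vertices shows that no numerator set is
   a denominator set, so the fraction is in lowest terms.  The action of s is a
   ring automorphism, hence preserves primes and lowest terms; so the
   denominators s(den P) and den P' of the two sides of the hypothesis divide
   each other, and comparing degrees gives n + |Ram P| = n + |Ram P'|. *)

From HB Require Import structures.
From mathcomp Require Import all_boot all_order all_algebra all_fingroup.
From mathcomp Require Import mpoly.
Set Implicit Arguments.
Unset Strict Implicit.
Unset Printing Implicit Defensive.
Import GRing.Theory Num.Theory.
Local Open Scope ring_scope.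

Section Divisibility.
Variable R : comPzRingType.

Definition dvdr (a b : R) := exists q, b = a * q.

Lemma dvdrr a : dvdr a a. Proof. by exists 1; rewrite mulr1. Qed.
Lemma dvdr0 a : dvdr a 0. Proof. by exists 0; rewrite mulr0. Qed.

Lemma dvdrD d a b : dvdr d a -> dvdr d b -> dvdr d (a + b).
Proof. by move=> [q ->] [q' ->]; exists (q + q'); rewrite mulrDr. Qed.

Lemma dvdrMl d a b : dvdr d b -> dvdr d (a * b).
Proof. by move=> [q ->]; exists (a * q); rewrite mulrCA. Qed.

Lemma dvdrMr d a b : dvdr d a -> dvdr d (a * b).
Proof. by move=> [q ->]; exists (q * b); rewrite mulrA. Qed.

Lemma dvdr_trans a b c : dvdr a b -> dvdr b c -> dvdr a c.
Proof. by move=> [q ->] [q' ->]; exists (q * q'); rewrite mulrA. Qed.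

Lemma dvdr_sum d (I : Type) (r : seq I) (P : pred I) (F : I -> R) :
  (forall i, P i -> dvdr d (F i)) -> dvdr d (\sum_(i <- r | P i) F i).
Proof. by move=> dF; elim/big_rec: _ => [|i x Pi]; [apply: dvdr0 | apply/dvdrD/dF]. Qed.

Lemma dvdr_subM d a a' b b' :
  dvdr d (a - a') -> dvdr d (b - b') -> dvdr d (a * b - a' * b').
Proof.
have -> : a * b - a' * b' = a * (b - b') + (a - a') * b'.
  by rewrite mulrBr mulrBl addrA subrK.
by move=> da db; apply: dvdrD; [apply: dvdrMl | apply: dvdrMr].
Qed.

Lemma dvdr_subX d a b m : dvdr d (a - b) -> dvdr d (a ^+ m - b ^+ m).
Proof.
move=> dab; elim: m => [|m IHm]; first by rewrite !expr0 subrr; apply: dvdr0.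
by rewrite !exprS; apply: dvdr_subM.
Qed.

Lemma dvdr_sub_prod d (I : Type) (r : seq I) (P : pred I) (F G : I -> R) :
  (forall i, P i -> dvdr d (F i - G i)) ->
  dvdr d (\prod_(i <- r | P i) F i - \prod_(i <- r | P i) G i).
Proof.
move=> dFG; apply: (big_ind2 (fun x y => dvdr d (x - y))) => //.
  by rewrite subrr; apply: dvdr0.
by move=> *; apply: dvdr_subM.
Qed.

End Divisibility.

Section PrimeElements.
Variable R : idomainType.

Definition prime_elt (p : R) :=
  [/\ p != 0, ~ dvdr p 1 & forall a b, dvdr p (a * b) -> dvdr p a \/ dvdr p b].

Lemma prime_ndvdr_prod (I : eqType) (r : seq I) (F : I -> R) p : prime_elt p ->
  (forall i, i \in r -> ~ dvdr p (F i)) -> ~ dvdr p (\prod_(i <- r) F i).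
Proof.
case=> _ p1 pM; elim: r => [|i r IHr] npF; first by rewrite big_nil.
rewrite big_cons => /pM[]; first by apply: npF; rewrite mem_head.
by apply: IHr => j jr; apply: npF; rewrite inE jr orbT.
Qed.

Lemma prod_primes_Gauss_dvdr (I : eqType) (r : seq I) (F : I -> R) a b :
  (forall i, i \in r -> prime_elt (F i) /\ ~ dvdr (F i) a) ->
  dvdr (\prod_(i <- r) F i) (a * b) -> dvdr (\prod_(i <- r) F i) b.
Proof.
elim: r b => [|i r IHr] b pF; first by rewrite big_nil => _; exists b; rewrite mul1r.
have [[Fi0 _ FiM] nFia] := pF i (mem_head _ _).
rewrite big_cons => dab.
have [//|[b' def_b]] := FiM _ _ (dvdr_trans (dvdrMr _ (dvdrr (F i))) dab); subst b.
have dQ : dvdr (\prod_(j <- r) F j) (a * b').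
  by case: dab => q; rewrite mulrCA -mulrA => /(mulfI Fi0) ->; exists q.
have [|q ->] := IHr b' _ dQ; last by exists q; rewrite mulrA.
by move=> j jr; apply: pF; rewrite inE jr orbT.
Qed.

Lemma prod_primes_dvdr_cross (I : eqType) (r : seq I) (F : I -> R) a b c u v :
  u \is a GRing.unit -> (forall i, i \in r -> prime_elt (F i) /\ ~ dvdr (F i) a) ->
  u * a * c = v * b * \prod_(i <- r) F i -> dvdr (\prod_(i <- r) F i) c.
Proof.
move=> Uu pF E; apply: (prod_primes_Gauss_dvdr pF).
exists (u^-1 * v * b); have -> : a * c = u^-1 * (u * a * c) by rewrite -mulrA mulKr.
by rewrite E [RHS]mulrC !mulrA.
Qed.

Section Isomorphism.
Variables (f : {rmorphism R -> R}) (g : R -> R).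
Hypotheses (fK : cancel f g) (gK : cancel g f).

Lemma dvdr_rmorph a b : dvdr (f a) (f b) <-> dvdr a b.
Proof.
split=> [[q fb]|[q ->]]; last by exists (f q); rewrite rmorphM.
by exists (g q); apply: (can_inj fK); rewrite rmorphM gK -fb.
Qed.

Lemma prime_elt_rmorph p : prime_elt p -> prime_elt (f p).
Proof.
case=> p0 p1 pM; split.
- by apply: contra_neq p0 => fp0; rewrite -(fK p) fp0 -{1}(rmorph0 f) fK.
- by rewrite -(rmorph1 f) dvdr_rmorph.
- move=> a b; rewrite -(gK a) -(gK b) -rmorphM !dvdr_rmorph; exact: pM.
Qed.

End Isomorphism.
End PrimeElements.

Section Substitution.
Variables (n : nat) (K : comNzRingType).
Local Notation R := {mpoly K[n]}.

Lemma comp_mpolyXU_mktuple (f : 'I_n -> R) i : 'X_i \mPo [tuple f j | j < n] = f i.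
Proof. by rewrite comp_mpolyXU -tnth_nth tnth_mktuple. Qed.

Lemma comp_mpolyA (p : R) (lf lg : n.-tuple R) :
  (p \mPo lf) \mPo lg = p \mPo [tuple tnth lf i \mPo lg | i < n].
Proof.
rewrite [p]mpolyE (raddf_sum (comp_mpoly lf)) !raddf_sum; apply: eq_bigr => m _ /=.
rewrite !comp_mpolyZ !comp_mpolyX rmorph_prod; congr (_ *: _).
by apply: eq_bigr => i _; rewrite rmorphXn tnth_mktuple.
Qed.

Lemma dvdr_sub_comp_mpoly (d : R) (lq : n.-tuple R) p :
  (forall i, dvdr d ('X_i - tnth lq i)) -> dvdr d (p - (p \mPo lq)).
Proof.
move=> dX.
have -> : p - (p \mPo lq) =
    \sum_(m <- msupp p) (p@_m)%:MP * ('X_[m] - ('X_[m] \mPo lq)).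
  under eq_bigr => m _ do rewrite mul_mpolyC scalerBr.
  by rewrite sumrB -comp_mpolyEX -mpolyE.
apply: dvdr_sum => m _; apply: dvdrMl.
by rewrite comp_mpolyX mpolyXE_id; apply: dvdr_sub_prod => i _; apply: dvdr_subX.
Qed.

End Substitution.

Section LinearForms.
Variable n : nat.
Local Notation R := {mpoly rat[n]}.

Lemma mcoeff_uS (S : {set 'I_n}) j : (uS S)@_U_(j) = (j \in S)%:R.
Proof.
rewrite /uS raddf_sum /=; under eq_bigr do rewrite mcoeffXU.
have [jS|jNS] := boolP (j \in S); last first.
  by rewrite big1 // => i iS; case: eqP => // eij; rewrite -eij iS in jNS.
by rewrite (big_setD1 j) //= eqxx big1 ?addr0 // => i /setD1P[/negbTE->].
Qed.

Lemma uS_inj : injective (@uS n).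
Proof.
move=> A B eAB; apply/setP => j; have := congr1 (mcoeff U_(j)) eAB.
by rewrite !mcoeff_uS => /eqP; rewrite eqr_nat; do 2!case: (_ \in _).
Qed.

Lemma uS_eq0 (A : {set 'I_n}) : (uS A == 0) = (A == set0).
Proof.
have uS0 : uS (set0 : {set 'I_n}) = 0 by rewrite /uS big_set0.
by rewrite -uS0 (inj_eq uS_inj).
Qed.

Lemma uS_setD1 (A : {set 'I_n}) k : k \in A -> uS A = 'X_k + uS (A :\ k).
Proof. by move=> kA; rewrite /uS (big_setD1 k). Qed.

Section Kill.
Variables (S : {set 'I_n}) (k : 'I_n).
Hypothesis kS : k \in S.

(* Substituting -(uS (S :\ k)) for u_k kills exactly the multiples of uS S. *)
Definition kill_tuple : n.-tuple R :=
  [tuple if i == k then - uS (S :\ k) else 'X_i | i < n].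
Local Notation kill := (comp_mpoly kill_tuple).

Lemma kill_uS (T : {set 'I_n}) :
  kill (uS T) = if k \in T then uS (T :\ k) - uS (S :\ k) else uS T.
Proof.
rewrite /uS rmorph_sum /=; under eq_bigr do rewrite comp_mpolyXU_mktuple.
have [kT|kNT] := ifPn; last first.
  by apply: eq_bigr => i iT; case: eqP => // eik; rewrite -eik iT in kNT.
rewrite (big_setD1 k) //= eqxx addrC; congr (_ + _).
by apply: eq_bigr => i /setD1P[/negbTE->].
Qed.

Lemma dvdr_uS_kill (A : R) : dvdr (uS S) A <-> kill A = 0.
Proof.
split=> [[q ->]|kA0]; first by rewrite rmorphM /= kill_uS kS subrr mul0r.
rewrite -[A]subr0 -kA0; apply: dvdr_sub_comp_mpoly => i; rewrite tnth_mktuple.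
case: eqP => [->|_]; last by rewrite subrr; apply: dvdr0.
by rewrite opprK -uS_setD1 //; apply: dvdrr.
Qed.

End Kill.

Lemma uS_prime (S : {set 'I_n}) : S != set0 -> prime_elt (uS S).
Proof.
case/set0Pn => k kS; split; first by rewrite uS_eq0; apply/set0Pn; exists k.
  by move/(dvdr_uS_kill kS)/eqP; rewrite rmorph1 oner_eq0.
move=> a b /(dvdr_uS_kill kS)/eqP; rewrite rmorphM mulf_eq0.
by case/orP=> /eqP/(dvdr_uS_kill kS); [left | right].
Qed.

Lemma uS_ndvdr (S T : {set 'I_n}) :
  S != set0 -> T != set0 -> T != S -> ~ dvdr (uS S) (uS T).
Proof.
case/set0Pn => k kS T0 TS /(dvdr_uS_kill kS); rewrite kill_uS.
case: ifP => [kT /eqP|_ /eqP]; last by rewrite uS_eq0 (negbTE T0).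
rewrite subr_eq0 => /eqP/uS_inj eTS; apply/negP: TS; apply/negPn/eqP.
by rewrite -(setD1K kT) -(setD1K kS) eTS.
Qed.

End LinearForms.

HB.instance Definition _ (n : nat) (s : 'S_n.+1) :=
  GRing.RMorphism.copy (sigma_poly s)
    (comp_mpoly [tuple uvar (s (lift ord0 i)) | i < n]).

Section Sigma.
Variable n : nat.
Local Notation R := {mpoly rat[n]}.

Lemma sum_uvar : \sum_(j < n.+1) uvar j = 0 :> R.
Proof.
rewrite big_ord_recl /uvar unlift_none addrC.
by under eq_bigr do rewrite liftK; apply: subrr.
Qed.

Lemma sigma_uvar (s : 'S_n.+1) j : sigma_poly s (uvar j) = uvar (s j).
Proof.
have sX i : sigma_poly s 'X_i = uvar (s (lift ord0 i)).
  exact: comp_mpolyXU_mktuple.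
case: (unliftP ord0 j) => [i ->|->]; first by rewrite {1}/uvar liftK sX.
rewrite {1}/uvar unlift_none rmorphN rmorph_sum /=; under eq_bigr do rewrite sX.
apply/eqP; rewrite eq_sym -addr_eq0 -(big_ord_recl n (fun j => uvar (s j))).
by have := sum_uvar; rewrite (reindex_inj (@perm_inj _ s)) => /eqP.
Qed.

Lemma sigma_poly_comp (s t : 'S_n.+1) (p : R) :
  sigma_poly t (sigma_poly s p) = sigma_poly (s * t) p.
Proof.
rewrite /sigma_poly comp_mpolyA; congr comp_mpoly.
by apply: eq_from_tnth => i; rewrite !tnth_mktuple -/(sigma_poly t _) sigma_uvar permM.
Qed.

Lemma sigma_poly1 (p : R) : sigma_poly 1 p = p.
Proof.
rewrite /sigma_poly -[RHS]comp_mpoly_id; congr comp_mpoly.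
by apply: eq_from_tnth => i; rewrite !tnth_mktuple perm1 /uvar liftK.
Qed.

Lemma sigma_polyK (s : 'S_n.+1) : cancel (sigma_poly s) (sigma_poly s^-1).
Proof. by move=> p; rewrite sigma_poly_comp mulgV sigma_poly1. Qed.

Lemma sigma_polyVK (s : 'S_n.+1) : cancel (sigma_poly s^-1) (sigma_poly s).
Proof. by move=> p; rewrite sigma_poly_comp mulVg sigma_poly1. Qed.

Lemma sigma_poly_eq0 (s : 'S_n.+1) (p : R) : (sigma_poly s p == 0) = (p == 0).
Proof. by rewrite -[p == 0](inj_eq (can_inj (sigma_polyK s))) rmorph0. Qed.

End Sigma.

Section Size.
Variable n : nat.
Local Notation R := {mpoly rat[n]}.

Lemma msize_sum_linear (I : Type) (r : seq I) (P : pred I) (F : I -> 'I_n) :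
  (msize (\sum_(i <- r | P i) 'X_(F i) : R) <= 2)%N.
Proof.
apply: leq_trans (msize_sum _ _ _) _.
by elim/big_rec: _ => // i x _ le_x2; rewrite geq_max msizeX mdeg1.
Qed.

Lemma msize_uS (S : {set 'I_n}) : S != set0 -> msize (uS S) = 2%N.
Proof.
case/set0Pn => k kS; apply/eqP; rewrite eqn_leq msize_sum_linear /=.
have : U_(k)%MM \in msupp (uS S).
  by rewrite mcoeff_msupp mcoeff_uS kS oner_eq0.
by move/msize_mdeg_lt; rewrite mdeg1.
Qed.

Lemma msize_sigma_uS (s : 'S_n.+1) (S : {set 'I_n}) : S != set0 ->
  msize (sigma_poly s (uS S)) = 2%N.
Proof.
move=> S0; apply/eqP; rewrite eqn_leq; apply/andP; split.
  rewrite rmorph_sum /=; apply: leq_trans (msize_sum _ _ _) _.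
  elim/big_rec: _ => // i x _ le_x2; rewrite geq_max le_x2 andbT.
  rewrite /sigma_poly comp_mpolyXU_mktuple /uvar; case: unlift => [j|].
    by rewrite msizeX mdeg1.
  by rewrite msizeN msize_sum_linear.
rewrite ltnNge; apply/negP => /msize1_polyC sC.
have := msize_uS S0; rewrite -(sigma_polyK s (uS S)) sC /sigma_poly comp_mpolyC.
by rewrite msizeC; case: (_ != 0).
Qed.

Lemma msize_prod_linear (I : eqType) (r : seq I) (F : I -> R) :
  (forall i, i \in r -> msize (F i) = 2%N) -> msize (\prod_(i <- r) F i) = (size r).+1.
Proof.
elim: r => [|i r IHr] F2; first by rewrite big_nil msize1.
have Fi2 : msize (F i) = 2%N by apply: F2; rewrite mem_head.
have Fr : msize (\prod_(j <- r) F j) = (size r).+1.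
  by apply: IHr => j jr; apply: F2; rewrite inE jr orbT.
by rewrite big_cons msizeM -?msize_poly_eq0 ?Fi2 ?Fr.
Qed.

Lemma msize_dvdr (a b : R) : b != 0 -> dvdr a b -> (msize a <= msize b)%N.
Proof.
move=> b0 [q def_b]; move: b0; rewrite def_b mulf_eq0 negb_or => /andP[a0 q0].
rewrite msizeM // -subn1 -addnBA ?leq_addr // lt0n msize_poly_eq0 //.
Qed.

End Size.

Section Fractions.
Variable R : idomainType.

Lemma frac_numden (x : {fraction R}) :
  x = (\n_(generic_quotient.repr x))%:F / (\d_(generic_quotient.repr x))%:F.
Proof.
set r := generic_quotient.repr x; have d0 : \d_r != 0 := denom_ratioP _.
apply: (@mulIf _ (\d_r)%:F); first by rewrite tofrac_eq0.
rewrite mulfVK ?tofrac_eq0 // -[x]generic_quotient.reprK -/r !generic_quotient.piE.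
apply/generic_quotient.eqmodP; rewrite /= FracField.equivfE /FracField.mulf /=.
by rewrite !numden_Ratio ?mulf_neq0 ?oner_neq0 // !mulr1 mulrC.
Qed.

Lemma eq_tofrac_div (a b a' b' : R) : b != 0 -> b' != 0 ->
  (a%:F / b%:F == a'%:F / b'%:F) = (a * b' == a' * b).
Proof. by move=> b0 b'0; rewrite eqr_div ?tofrac_eq0 // -!tofracM tofrac_eq. Qed.

End Fractions.

Lemma sigma_act_frac (n : nat) (s : 'S_n.+1) (a b : {mpoly rat[n]}) : b != 0 ->
  sigma_act s (a%:F / b%:F) = (sigma_poly s a)%:F / (sigma_poly s b)%:F.
Proof.
move=> b0; rewrite /sigma_act; set r := generic_quotient.repr (a%:F / b%:F).
have d0 : \d_r != 0 := denom_ratioP _.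
apply/eqP; rewrite eq_tofrac_div ?sigma_poly_eq0 // -!rmorphM; apply/eqP.
by congr sigma_poly; apply/eqP; rewrite -eq_tofrac_div // -frac_numden.
Qed.

Section ShrubCombinatorics.
Local Open Scope nat_scope.
Variables (n : nat) (P : shrub n).
Local Notation h := (sh_height P).
Local Notation cov := (covers P).

Lemma covers_height j i : cov j i -> h j = (h i).+1.
Proof. by case/andP => _ /eqP. Qed.

Let below : rel 'I_n := fun x y => h y < h x.

Let below_trans : transitive below.
Proof. by move=> y x z hyx hzy; apply: ltn_trans hzy hyx. Qed.

Let path_below j p : path cov j p -> path below j p.
Proof. by apply: sub_path => x y /covers_height; rewrite /below => ->. Qed.

Lemma path_covers_height j p x : path cov j p -> x \in j :: p -> (x == j) || (h x < h j).
Proof.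
move/path_below/order_path_min => /(_ below_trans)/allP hp.
by rewrite inE => /orP[-> // | /hp xj]; apply/orP; right.
Qed.

Lemma path_covers_size j p : path cov j p -> size p < n.+1.
Proof.
move=> pp; have /card_uniqP e : uniq (j :: p).
  exact: (sorted_uniq below_trans (fun x => ltnn (h x)) (path_below pp : sorted _ (j :: p))).
by have := max_card (mem (j :: p)); rewrite e card_ord /= ltnS => /ltnW.
Qed.

Lemma exists_ground_path j : exists2 p, path cov j p & h (last j p) == 0.
Proof.
have [m] := ubnP (h j); elim: m j => // m IHm j hj.
have [hj0|/sh_ax2[i ci]] := posnP (h j); first by exists [::]; rewrite //= hj0.
have [|p pp lp] := IHm i; first by move: hj; rewrite (covers_height ci) ltnS.
by exists (i :: p); rewrite //= pp andbT.
Qed.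

Lemma lang_ground (V0 S : {set 'I_n}) j p : j \in lang P V0 S -> path cov j p ->
  all (fun x => x \in V0) p -> h (last j p) == 0 -> has (fun x => x \in S) (j :: p).
Proof.
rewrite inE => /andP[_ /forallP lj] pp p_V0 lp.
have /forallP/(_ (in_tuple p))/implyP := lj (Ordinal (path_covers_size pp)).
by apply; rewrite /= pp p_V0 lp.
Qed.

Lemma lang_intro (V0 S : {set 'I_n}) j : j \in V0 ->
  (forall p, path cov j p -> all (fun x => x \in V0) p -> h (last j p) == 0 ->
     has (fun x => x \in S) (j :: p)) -> j \in lang P V0 S.
Proof.
move=> jV0 lj; rewrite inE jV0; apply/forallP => k; apply/forallP => p.
by apply/implyP => /andP[/andP[pp p_V0] lp]; apply: lj.
Qed.

Lemma mem_lang (V0 S : {set 'I_n}) j : j \in V0 -> j \in S -> j \in lang P V0 S.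
Proof. by move=> jV0 jS; apply: lang_intro => // p _ _ _; rewrite /= jS. Qed.

Lemma lang_dom (V0 S : {set 'I_n}) j : j \in lang P V0 S -> j \in V0.
Proof. by rewrite inE => /andP[]. Qed.

Lemma langle_ground (S : {set 'I_n}) j p : j \in langle P S -> path cov j p ->
  h (last j p) == 0 -> has (fun x => x \in S) (j :: p).
Proof. by move=> jS pp; apply: lang_ground jS pp _; apply/allP => x; rewrite in_setT. Qed.

(* A ground path that avoids [S] avoids [<S>] as well: any of its vertices in
   [<S>] would start a ground path avoiding [S]. *)
Lemma notin_langle_ground_path (S : {set 'I_n}) j : j \notin langle P S ->
  exists2 p, path cov j p & (h (last j p) == 0) && all (fun x => x \in ~: langle P S) p.
Proof.
rewrite inE in_setT /= => /forallPn[k /forallPn[p]].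
rewrite negb_imply => /andP[/andP[/andP[pp _] lp] pNS].
exists p => //; rewrite lp; apply/allP => x x_p; rewrite inE; apply/negP => xS.
case/splitPr: x_p pp lp pNS xS => p1 p2.
rewrite cat_path last_cat /= => /andP[_ /andP[_ pp2]] lp pNS xS.
by move: pNS; rewrite /= has_cat; move: (langle_ground xS pp2 lp) => /= ->; rewrite !orbT.
Qed.

Lemma lang_low (V0 S : {set 'I_n}) x : x \in lang P V0 S ->
  (exists2 p, path cov x p & all (fun y => y \in V0) p && (h (last x p) == 0)) ->
  exists2 y, y \in S & (y == x) || (h y < h x).
Proof.
move=> xS [p pp /andP[p_V0 lp]].
have /hasP[y y_p yS] := lang_ground xS pp p_V0 lp.
by exists y => //; apply: path_covers_height pp y_p.
Qed.

Lemma langle_low (S : {set 'I_n}) x : x \in langle P S ->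
  exists2 y, y \in S & (y == x) || (h y < h x).
Proof.
move=> xS; apply: lang_low xS _; have [p pp lp] := exists_ground_path x.
by exists p; rewrite // lp andbT; apply/allP => y; rewrite in_setT.
Qed.

Definition ram_class v := [set w | ramified P w && (down P w == down P v)].

Definition numer_set (r : {set 'I_n}) := lang P (~: langle P r) (rminus P r).

Lemma Ram_class r : r \in Ram P -> exists2 v, ramified P v & r = ram_class v.
Proof. by case/imsetP => v; rewrite inE => ramv ->; exists v. Qed.

Lemma down_height v b : b \in down P v -> h v = (h b).+1.
Proof. by rewrite inE => /covers_height. Qed.

Lemma down_height_eq v b c : b \in down P v -> c \in down P v -> h b = h c.
Proof. by move=> bv cv; apply: succn_inj; rewrite -(down_height bv) -(down_height cv). Qed.

Section RamifiedVertex.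
Variable v : 'I_n.
Hypothesis ramv : ramified P v.

Lemma down_neq0 : exists b, b \in down P v.
Proof. by apply/card_gt0P; apply: ltnW. Qed.

Lemma rminus_ram_class : rminus P (ram_class v) = down P v.
Proof.
apply/setP => x; apply/bigcupP/idP => [[w] | xv]; first by rewrite inE => /andP[_ /eqP->].
by exists v => //; rewrite inE ramv eqxx.
Qed.

Lemma ram_class_height w : w \in ram_class v -> h w = h v.
Proof.
rewrite inE => /andP[_ /eqP dw]; have [b bv] := down_neq0.
by rewrite (down_height bv); move: bv; rewrite -dw inE => /covers_height.
Qed.

Lemma down_notin_langle b : b \in down P v -> b \notin langle P (ram_class v).
Proof.
move=> bv; apply/negP => /langle_low[y /ram_class_height hy].
have hyb : h y = (h b).+1 by rewrite hy (down_height bv).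
case/orP => [/eqP eyb | ]; last by rewrite hyb ltnNge leqnSn.
by move: hyb; rewrite eyb => /n_Sn.
Qed.

Lemma down_sub_numer_set b : b \in down P v -> b \in numer_set (ram_class v).
Proof.
by move=> bv; rewrite /numer_set mem_lang ?rminus_ram_class // inE down_notin_langle.
Qed.

Lemma numer_set_low x : x \in numer_set (ram_class v) ->
  exists2 y, y \in down P v & (y == x) || (h y < h x).
Proof.
move=> xN; have := lang_dom xN; rewrite inE => /notin_langle_ground_path[p pp pV0].
by rewrite -rminus_ram_class; apply: lang_low xN _; exists p; rewrite // andbC.
Qed.

Lemma mem_langle_down : v \in langle P (down P v).
Proof.
apply: lang_intro; rewrite ?in_setT // => -[|y p] /=.
  by have [b bv] := down_neq0; rewrite (down_height bv).
by case/andP => vy _ _ _; rewrite !inE vy orbT.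
Qed.

End RamifiedVertex.

Definition denom_sets : seq {set 'I_n} :=
  [seq langle P [set i] | i <- enum 'I_n] ++ [seq langle P (rminus P r) | r <- enum (Ram P)].

Lemma size_denom_sets : size denom_sets = n + #|Ram P|.
Proof. by rewrite size_cat !size_map -cardE -enumT size_enum_ord. Qed.

Lemma denom_sets_neq0 S : S \in denom_sets -> S != set0.
Proof.
rewrite mem_cat => /orP[/mapP[i _ ->] | /mapP[r]].
  by apply/set0Pn; exists i; apply: mem_lang; rewrite ?in_setT ?set11.
rewrite mem_enum => /Ram_class[v ramv ->] ->; have [b bv] := down_neq0 ramv.
by apply/set0Pn; exists b; apply: mem_lang; rewrite ?in_setT ?rminus_ram_class.
Qed.

Lemma numer_set_neq0 r : r \in Ram P -> numer_set r != set0.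
Proof.
case/Ram_class => v ramv ->; have [b bv] := down_neq0 ramv.
by apply/set0Pn; exists b; apply: down_sub_numer_set.
Qed.

Lemma numer_set_neq_langle1 v i : ramified P v -> numer_set (ram_class v) != langle P [set i].
Proof.
move=> ramv; apply/eqP => Ev.
have [y yv hyi] : exists2 y, y \in down P v & (y == i) || (h y < h i).
  by apply: numer_set_low; rewrite // Ev; apply: mem_lang; rewrite ?in_setT ?set11.
have down_i x : x \in down P v -> x = i.
  move=> xv; have := down_sub_numer_set ramv xv; rewrite Ev.
  case/langle_low => z /set1P-> /orP[/eqP // | hix]; exfalso.
  have hyx := down_height_eq yv xv.
  case/orP: hyi => [/eqP eyi | hyi]; first by move: hix; rewrite -eyi hyx ltnn.
  by have := ltn_trans hyi hix; rewrite hyx ltnn.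
have /card_gt1P[b [c [bv cv]]] := ramv.
by rewrite (down_i b bv) (down_i c cv) eqxx.
Qed.

Section Domination.
Variables v v' : 'I_n.
Hypothesis ramv : ramified P v.
Hypothesis low : forall x, x \in down P v ->
  exists2 y, y \in down P v' & (y == x) || (h y < h x).

Lemma dominated_height : h v' <= h v.
Proof.
have [b bv] := down_neq0 ramv; have [y yv' hyb] := low bv.
rewrite (down_height yv') (down_height bv) ltnS.
by case/orP: hyb => [/eqP-> | /ltnW].
Qed.

Lemma dominated_sub : h v <= h v' -> down P v \subset down P v'.
Proof.
move=> hvv'; apply/subsetP => x xv; have [y yv' /orP[/eqP <- // | hyx]] := low xv.
by move: hvv'; rewrite (down_height xv) (down_height yv') ltnS leqNgt hyx.
Qed.

End Domination.

Lemma numer_set_neq_langle_rminus v v' : ramified P v -> ramified P v' ->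
  numer_set (ram_class v) != langle P (rminus P (ram_class v')).
Proof.
move=> ramv ramv'; apply/eqP; rewrite rminus_ram_class // => Ev.
have low x : x \in down P v -> exists2 y, y \in down P v' & (y == x) || (h y < h x).
  by move/(down_sub_numer_set ramv); rewrite Ev => /langle_low.
have low' x : x \in down P v' -> exists2 y, y \in down P v & (y == x) || (h y < h x).
  move=> xv'; apply: numer_set_low; rewrite // Ev.
  by apply: mem_lang; rewrite ?in_setT.
have hv : h v = h v'.
  by apply/eqP; rewrite eqn_leq (dominated_height ramv' low') (dominated_height ramv low).
have /eqP dv : down P v == down P v'.
  by rewrite eqEsubset (dominated_sub low) ?(dominated_sub low') ?hv.
have := mem_langle_down ramv; rewrite dv -Ev => /lang_dom; rewrite inE.
by rewrite mem_lang ?in_setT // inE ramv eqxx.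
Qed.

Lemma numer_set_notin_denom r : r \in Ram P -> numer_set r \notin denom_sets.
Proof.
case/Ram_class => v ramv ->; rewrite mem_cat negb_or; apply/andP; split.
  by apply/mapP => -[i _]; apply/eqP/numer_set_neq_langle1.
apply/mapP => -[r']; rewrite mem_enum => /Ram_class[v' ramv' ->].
by apply/eqP/numer_set_neq_langle_rminus.
Qed.

End ShrubCombinatorics.

Section Assembly.
Variable n : nat.
Local Notation R := {mpoly rat[n]}.

Definition fnum (P : shrub n) : R := \prod_(r <- enum (Ram P)) uS (numer_set P r).
Definition fden (P : shrub n) : R := \prod_(S <- denom_sets P) uS S.

Lemma fP_frac P : fP P = (fnum P)%:F / (fden P)%:F.
Proof.
rewrite /fP /fnum /fden big_cat !big_map /= !big_enum /=.
rewrite tofracM invfM !rmorph_prod /= !prodfV mulrCA; congr (_ * _).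
by rewrite -prodfV -big_split.
Qed.

Lemma fden_factor_prime P S : S \in denom_sets P ->
  prime_elt (uS S) /\ ~ dvdr (uS S) (fnum P).
Proof.
move=> SP; have S0 := denom_sets_neq0 SP; split; first exact: uS_prime.
apply: prime_ndvdr_prod (uS_prime S0) _ => r; rewrite mem_enum => rP.
apply: uS_ndvdr S0 (numer_set_neq0 rP) _.
by apply/eqP => eNS; move: (numer_set_notin_denom rP); rewrite eNS SP.
Qed.

Lemma sigma_fden_factor_prime (s : 'S_n.+1) P S : S \in denom_sets P ->
  prime_elt (sigma_poly s (uS S)) /\ ~ dvdr (sigma_poly s (uS S)) (sigma_poly s (fnum P)).
Proof.
case/fden_factor_prime => pS nS; split.
  exact: (prime_elt_rmorph (sigma_polyK s) (sigma_polyVK s) pS).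
by move/(dvdr_rmorph (sigma_polyK s) (sigma_polyVK s)).
Qed.

Lemma msize_sigma_fden (s : 'S_n.+1) P :
  msize (sigma_poly s (fden P)) = (n + #|Ram P|).+1.
Proof.
rewrite rmorph_prod -size_denom_sets; apply: msize_prod_linear => S SP.
exact: msize_sigma_uS (denom_sets_neq0 SP).
Qed.

Lemma sigma_fden_neq0 (s : 'S_n.+1) P : sigma_poly s (fden P) != 0.
Proof. by rewrite -msize_poly_eq0 msize_sigma_fden. Qed.

Lemma msize_fden P : msize (fden P) = (n + #|Ram P|).+1.
Proof. by rewrite -(sigma_poly1 (fden P)) msize_sigma_fden. Qed.

Lemma fden_neq0 P : fden P != 0.
Proof. by rewrite -msize_poly_eq0 msize_fden. Qed.

Lemma sigma_act_fP (s : 'S_n.+1) (e e' : bool) (P P' : shrub n) :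
  sigma_act s (sgn n e * fP P) = sgn n e' * fP P' ->
  (-1) ^+ e * sigma_poly s (fnum P) * fden P' =
  (-1) ^+ e' * fnum P' * sigma_poly s (fden P).
Proof.
have sgnE b : sgn n b = ((-1) ^+ b : R)%:F by rewrite /sgn rmorph_sign.
rewrite !fP_frac !sgnE !mulrA -!tofracM sigma_act_frac ?fden_neq0 // rmorphM rmorph_sign.
by move=> /eqP; rewrite eq_tofrac_div ?fden_neq0 ?sigma_fden_neq0 // => /eqP.
Qed.

End Assembly.

Theorem mainTheorem17 (n : nat) (s : 'S_n.+1) (e e' : bool) (P P' : shrub n) :
  sigma_act s (sgn n e * fP P) = sgn n e' * fP P' ->
  #|Ram P| = #|Ram P'|.
Proof.
move/sigma_act_fP => E.
have sign_unit (b : bool) : ((-1) ^+ b : {mpoly rat[n]}) \is a GRing.unit.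
  by rewrite unitrX ?unitrN1.
have dvd1 : dvdr (fden P') (sigma_poly s (fden P)).
  have := prod_primes_dvdr_cross (sign_unit e') _ (esym E).
  by apply=> S /fden_factor_prime.
have dvd2 : dvdr (sigma_poly s (fden P)) (fden P').
  rewrite [sigma_poly s (fden P)]rmorph_prod in E *.
  have := prod_primes_dvdr_cross (sign_unit e) _ E.
  by apply=> S /(sigma_fden_factor_prime s).
have := msize_dvdr (sigma_fden_neq0 s P) dvd1; have := msize_dvdr (fden_neq0 P') dvd2.
rewrite msize_fden msize_sigma_fden !ltnS => le1 le2.
by apply/eqP; rewrite -(eqn_add2l n) eqn_leq le1 le2.
Qed.
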